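(* Let $G$ be a complete $k$-edge-colored graph with vertex set $V$. Suppose that for each strong module $M$ of $G$ there is a labeling $\ell^M$ such that $(G[M]/\mathbb{P}_{\max}(M),\ell^M)$ is a complete edge-colored permutation graph. Then, for all $i\in\{1,\dots,k\}$, the binary relation $\sqsubset_i$ defined on the labeling $\ell_{\prec}$ of $G$ (as described in the context) is a strict total order on $V$.
   Context: A complete $k$-edge-colored graph $G=(V,E_1,\dots,E_k)$ is a complete graph whose edges are colored surjectively by colors $\{1,\dots,k\}$, $E_i$ being the edges of color $i$. A labeling of a graph on vertex set $V$ is a bijection $V\to\{1,\dots,|V|\}$. A module of $G$ is a set $M\subseteq V$ such that for every $u\in M$ and $v\in V\setminus M$, if $\{u,v\}$ has color $i$ then $\{w,v\}$ has color $i$ for all $w\in M$; a module $M$ is strong if every other module $M'$ satisfies $M\subseteq M'$, $M'\subseteq M$ or $M\cap M'=\emptyset$. The strong modules form a hierarchy with inclusion tree $T_G$ (root $V$, leaves the singletons); $\mathbb{P}_{\max}(M)$ denotes the set of children of a strong module $M$ in $T_G$ (a partition of $M$). The quotient graph $G[M]/\mathbb{P}_{\max}(M)$ has vertex set $\mathbb{P}_{\max}(M)$, and an edge $\{M_a,M_b\}$ gets the (well-defined, common) color of the edges between $M_a$ and $M_b$ in $G$. A complete $k$-edge-colored graph $G$ together with a labeling $\ell$ is a complete edge-colored permutation graph if there are permutations $\pi_1,\dots,\pi_k$ of $\{1,\dots,|V|\}$ such that for all $i$ and all $u,v$: $\{u,v\}\in E_i$ iff $\ell(u)>\ell(v)$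 and $\pi_i^{-1}(\ell(u))<\pi_i^{-1}(\ell(v))$. For distinct $u,v\in V$, let $M^{u,v}$ be the inclusion-minimal strong module containing $u$ and $v$, and let $M^{u,v}_u, M^{u,v}_v\in\mathbb{P}_{\max}(M^{u,v})$ be the distinct children containing $u$ and $v$, respectively. Define the relation $\prec$ on $V$ by $u\prec v$ iff $\ell^{M^{u,v}}(M^{u,v}_u)<\ell^{M^{u,v}}(M^{u,v}_v)$; this is a strict total order, and $\ell_{\prec}\colon V\to\{1,\dots,|V|\}$ is the labeling with $\ell_{\prec}(u)<\ell_{\prec}(v)$ iff $u\prec v$. For a labeling $\ell$ of $G$ (here $\ell=\ell_{\prec}$) and $i\in\{1,\dots,k\}$, the relation $\sqsubset_i$ on $V$ is defined, for all distinct $u,v\in V$ with $\ell(u)>\ell(v)$, by: $u\sqsubset_i v$ if the edge $\{M^{u,v}_u,M^{u,v}_v\}$ has color $i$ in $G[M^{u,v}]/\mathbb{P}_{\max}(M^{u,v})$, and $v\sqsubset_i u$ otherwise. A strict total order is a trichotomous and transitive relation. *)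

From mathcomp Require Import all_boot.
Set Implicit Arguments. Unset Strict Implicit. Unset Printing Implicit Defensive.

(* A complete k-edge-colored graph on the finite vertex type V is given by
   a coloring col : V -> V -> nat; for distinct u v, col u v in {1..k} is
   the color of the edge {u,v}. *)
Section Defs.
Variables (V : finType) (col : V -> V -> nat).

Definition complete_colored (k : nat) : Prop :=
  (forall u v, u != v -> col u v = col v u) /\
  (forall u v, u != v -> 1 <= col u v <= k) /\
  (forall i, 1 <= i <= k -> exists u v, u != v /\ col u v = i).

Definition is_module (M : {set V}) : bool :=
  (M != set0) &&
  [forall u in M, forall v in ~: M, forall w in M, col w v == col u v].

Definition is_strong (M : {set V}) : bool :=
  is_module M &&
  [forall M' : {set V}, is_module M' ==>
     [|| M \subset M', M' \subset M | [disjoint M & M']]].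

Definition Pmax (M : {set V}) : {set {set V}} :=
  [set A : {set V} | [&& is_strong A, A \proper M &
     [forall B : {set V}, (is_strong B && (A \proper B)) ==> ~~ (B \proper M)]]].

Definition qcol (A B : {set V}) (i : nat) : Prop :=
  forall a b, a \in A -> b \in B -> col a b = i.

Definition perm1 (n : nat) (f : nat -> nat) : Prop :=
  (forall p, 1 <= p <= n -> 1 <= f p <= n) /\
  (forall p q, 1 <= p <= n -> 1 <= q <= n -> f p = f q -> p = q).

Definition quot_labeling (M : {set V}) (lab : {set V} -> nat) : Prop :=
  {in Pmax M &, injective lab} /\
  (forall A, A \in Pmax M -> 1 <= lab A <= #|Pmax M|).

Definition quot_perm_graph (k : nat) (M : {set V}) (lab : {set V} -> nat) : Prop :=
  quot_labeling M lab /\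
  exists pi : nat -> nat -> nat,
    forall i, 1 <= i <= k ->
      perm1 #|Pmax M| (pi i) /\
      forall A B, A \in Pmax M -> B \in Pmax M -> lab B < lab A ->
        (qcol A B i <->
         (* pi_i^{-1}(lab A) < pi_i^{-1}(lab B) *)
         exists p q, [/\ 1 <= p <= #|Pmax M|, 1 <= q <= #|Pmax M|,
                        pi i p = lab A, pi i q = lab B & p < q]).

Definition min_strong (u v : V) (M : {set V}) : Prop :=
  [/\ is_strong M, u \in M, v \in M &
      forall M', is_strong M' -> u \in M' -> v \in M' -> M' \subset M -> M' = M].

Definition prec (l : {set V} -> {set V} -> nat) (u v : V) : Prop :=
  exists M Mu Mv, [/\ min_strong u v M, Mu \in Pmax M, Mv \in Pmax M,
                      [/\ u \in Mu, v \in Mv & Mu != Mv] & l M Mu < l M Mv].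

Definition pair_qcol (u v : V) (i : nat) : Prop :=
  exists M Mu Mv, [/\ min_strong u v M, Mu \in Pmax M, Mv \in Pmax M,
                      [/\ u \in Mu, v \in Mv & Mu != Mv] & qcol Mu Mv i].

(* u ⊏_i v w.r.t. the labeling ℓ_≺ (ℓ_≺(x) < ℓ_≺(y) iff x ≺ y):
   for distinct u,v with ℓ_≺(u) > ℓ_≺(v) (i.e. v ≺ u): u ⊏_i v if the
   quotient edge has color i, and v ⊏_i u otherwise. *)
Definition sqsub (l : {set V} -> {set V} -> nat) (i : nat) (x y : V) : Prop :=
  x != y /\
  ((prec l y x /\ pair_qcol x y i) \/ (prec l x y /\ ~ pair_qcol y x i)).

Definition strict_total_order (R : V -> V -> Prop) : Prop :=
  (forall x y, [\/ R x y, x = y | R y x]) /\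
  (forall x, ~ R x x) /\
  (forall x y, R x y -> ~ R y x) /\
  (forall x y z, R x y -> R y z -> R x z).

End Defs.

From mathcomp Require Import all_boot.
From mathcomp Require Import zify.
Set Implicit Arguments. Unset Strict Implicit. Unset Printing Implicit Defensive.

(* For distinct u and v, whether u ⊏_i v is decided in the quotient of the
   minimal strong module M = M^{u,v}, and there, by the permutation-graph
   property of (G[M]/P_max(M), ℓ^M), it says exactly
   π_i^{-1}(ℓ^M(M_u)) < π_i^{-1}(ℓ^M(M_v)).  So on the children of each strong
   module the relation is the pull-back of the order of nat along an injection,
   hence a strict total order.  Transitivity across different modules comes
   from laminarity of strong modules: if u ⊏_i v is decided in M and v ⊏_i w in
   a strictly larger M', then M lies inside the child of M' containing v, so
   u ⊏_i w is decided in M' by the same pair of children as v ⊏_i w. *)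

Section PermutationOrder.
Variables (n : nat) (f : nat -> nat).
Hypothesis f_perm : perm1 n f.

Definition perm_lt (a b : nat) : Prop :=
  exists p q, [/\ 1 <= p <= n, 1 <= q <= n, f p = a, f q = b & p < q].

Lemma perm1_surj a : 1 <= a <= n -> exists2 p, 1 <= p <= n & f p = a.
Proof.
case: f_perm => f_rng f_inj a_rng.
have mem_range x : (x \in iota 1 n) = (1 <= x <= n) by rewrite mem_iota; lia.
have f_uniq : uniq (map f (iota 1 n)).
  by rewrite map_inj_in_uniq ?iota_uniq // => x y; rewrite !mem_range; apply: f_inj.
have f_sub : {subset map f (iota 1 n) <= iota 1 n}.
  by move=> x /mapP[p]; rewrite !mem_range => /f_rng ? ->.
have [_ f_onto] := uniq_min_size f_uniq f_sub (eq_leq (esym (size_map f _))).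
have : a \in map f (iota 1 n) by rewrite f_onto mem_range.
by case/mapP => p; rewrite mem_range => p_rng ->; exists p.
Qed.

Lemma perm_lt_irr a : ~ perm_lt a a.
Proof.
case: f_perm => _ f_inj [p [q [p_rng q_rng fp fq lt_pq]]].
by move: lt_pq; rewrite (f_inj p q) ?ltnn // fp fq.
Qed.

Lemma perm_lt_trans a b c : perm_lt a b -> perm_lt b c -> perm_lt a c.
Proof.
case: f_perm => _ f_inj [p [q [p_rng q_rng fp fq lt_pq]]].
move=> [q' [r [q'_rng r_rng fq' fr lt_q'r]]].
have eq_qq' : q = q' by apply: f_inj => //; rewrite fq fq'.
by exists p, r; split => //; rewrite eq_qq' in lt_pq; apply: ltn_trans lt_q'r.
Qed.

Lemma perm_lt_asym a b : perm_lt a b -> ~ perm_lt b a.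
Proof. by move=> ab /(perm_lt_trans ab); apply: perm_lt_irr. Qed.

Lemma perm_lt_total a b : 1 <= a <= n -> 1 <= b <= n -> a != b ->
  perm_lt a b \/ perm_lt b a.
Proof.
move=> /perm1_surj[p p_rng fp] /perm1_surj[q q_rng fq] neq_ab.
case: (ltngtP p q) => [lt_pq|lt_qp|eq_pq].
- by left; exists p, q.
- by right; exists q, p.
- by move: neq_ab; rewrite -fp -fq eq_pq eqxx.
Qed.

End PermutationOrder.

Section StrongModules.
Variables (V : finType) (col : V -> V -> nat).

Lemma strong_laminar A B x : is_strong col A -> is_strong col B ->
  x \in A -> x \in B -> (A \subset B) \/ (B \subset A).
Proof.
move=> /andP[_ /forallP A_strong] /andP[B_mod _] xA xB.
have := A_strong B; rewrite B_mod /= => /or3P[sub_AB | sub_BA | /pred0P/(_ x)].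
- by left.
- by right.
- by rewrite /= xA xB.
Qed.

Lemma strong_set1 x : is_strong col [set x].
Proof.
apply/andP; split.
  apply/andP; split; first by apply/set0Pn; exists x; rewrite inE.
  by apply/forall_inP => u /set1P ->; apply/forall_inP => v _; apply/forall_inP => w /set1P ->.
apply/forallP => M'; apply/implyP => _.
by case: (boolP (x \in M')) => xM'; rewrite ?sub1set ?disjoints1 xM' ?orbT.
Qed.

Lemma strong_setT (x : V) : is_strong col [set: V].
Proof.
apply/andP; split.
  apply/andP; split; first by apply/set0Pn; exists x; rewrite inE.
  by apply/forall_inP => u _; apply/forall_inP => v; rewrite !inE.
by apply/forallP => M'; apply/implyP => _; rewrite subsetT orbT.
Qed.

Lemma min_strong_exists x y : exists M, min_strong col x y M.
Proof.
pose P M := [&& is_strong col M, x \in M & y \in M].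
have P_setT : P setT by rewrite /P (strong_setT x) !inE.
case: (arg_minnP (fun M : {set V} => #|M|) P_setT) => M /and3P[M_strong xM yM] M_min.
exists M; split => // M' M'_strong xM' yM' sub_M'M.
by apply/eqP; rewrite eqEcard sub_M'M M_min // /P M'_strong xM' yM'.
Qed.

Lemma min_strong_uniq x y M M' :
  min_strong col x y M -> min_strong col x y M' -> M = M'.
Proof.
case=> M_strong xM yM M_min [M'_strong xM' yM' M'_min].
case: (strong_laminar M_strong M'_strong xM xM') => [sub_MM' | sub_M'M].
  exact: M'_min.
exact/esym/M_min.
Qed.

Lemma PmaxP M C : C \in Pmax col M ->
  [/\ is_strong col C, C \proper M &
      forall B, is_strong col B -> C \proper B -> ~~ (B \proper M)].
Proof.
rewrite inE => /and3P[C_strong ltCM /forallP C_max]; split => // B B_strong ltCB.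
by have := C_max B; rewrite B_strong ltCB.
Qed.

Lemma Pmax_sub M C : C \in Pmax col M -> C \subset M.
Proof. by case/PmaxP => _ /proper_sub. Qed.

Lemma strong_sub_Pmax M C S x : C \in Pmax col M -> is_strong col S ->
  S \proper M -> x \in S -> x \in C -> S \subset C.
Proof.
case/PmaxP => C_strong _ C_max S_strong ltSM xS xC.
case: (strong_laminar S_strong C_strong xS xC) => // sub_CS.
case: (eqVneq C S) => [<- // | neq_CS].
by have := C_max S S_strong; rewrite properEneq neq_CS sub_CS ltSM => /(_ isT).
Qed.

Lemma Pmax_eq M C D x : C \in Pmax col M -> D \in Pmax col M ->
  x \in C -> x \in D -> C = D.
Proof.
move=> PC PD xC xD; have [C_strong ltCM _] := PmaxP PC; have [D_strong ltDM _] := PmaxP PD.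
by apply/eqP; rewrite eqEsubset (strong_sub_Pmax PD C_strong ltCM xC xD)
  (strong_sub_Pmax PC D_strong ltDM xD xC).
Qed.

Lemma Pmax_cover M x y : is_strong col M -> x \in M -> y \in M -> x != y ->
  exists2 C, C \in Pmax col M & x \in C.
Proof.
move=> M_strong xM yM neq_xy.
pose P S := [&& is_strong col S, S \proper M & x \in S].
have P_set1 : P [set x].
  rewrite /P strong_set1 set11 andbT properE sub1set xM.
  by apply/subsetPn; exists y => //; rewrite inE eq_sym.
case: (arg_maxnP (fun S : {set V} => #|S|) P_set1) => C /and3P[C_strong ltCM xC] C_max.
exists C => //; rewrite inE C_strong ltCM; apply/forallP => B.
apply/implyP => /andP[B_strong ltCB]; apply/negP => ltBM.
have xB : x \in B by apply: subsetP (proper_sub ltCB) x xC.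
have := C_max B; rewrite /P B_strong ltBM xB => /(_ isT).
by move=> /(leq_trans (proper_card ltCB)); rewrite ltnn.
Qed.

(* [M], [C], [D] are M^{x,y}, M^{x,y}_x and M^{x,y}_y (see [splits_min_strong]). *)
Definition splits (M C D : {set V}) (x y : V) : Prop :=
  [/\ is_strong col M, C \in Pmax col M, D \in Pmax col M & [/\ x \in C, y \in D & C != D]].

Lemma splits_sym M C D x y : splits M C D x y -> splits M D C y x.
Proof. by case=> ? ? ? [? ? ?]; split; rewrite 1?eq_sym. Qed.

Lemma splits_neq M C D x y : splits M C D x y -> x != y.
Proof.
case=> _ PC PD [xC yD]; apply: contra_neq => eq_xy.
by apply: Pmax_eq PC PD xC _; rewrite eq_xy.
Qed.

Lemma splits_exists x y : x != y -> exists M C D, splits M C D x y.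
Proof.
move=> neq_xy; have [M [M_strong xM yM M_min]] := min_strong_exists x y.
have [C PC xC] := Pmax_cover M_strong xM yM neq_xy.
have neq_yx : y != x by rewrite eq_sym.
have [D PD yD] := Pmax_cover M_strong yM xM neq_yx.
exists M, C, D; split => //; split => //; apply/eqP => eq_CD.
have [C_strong ltCM _] := PmaxP PC.
have yC : y \in C by rewrite eq_CD.
by move: ltCM; rewrite (M_min C C_strong xC yC (Pmax_sub PC)) properxx.
Qed.

Lemma splits_min_strong M C D x y : splits M C D x y -> min_strong col x y M.
Proof.
case=> M_strong PC PD [xC yD neq_CD].
split; [done | exact: subsetP (Pmax_sub PC) x xC | exact: subsetP (Pmax_sub PD) y yD |].
move=> M' M'_strong xM' yM' sub_M'M.
apply/eqP/negPn/negP => neq_M'M.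
have ltM'M : M' \proper M by rewrite properEneq neq_M'M.
have /subsetP/(_ y yM') yC := strong_sub_Pmax PC M'_strong ltM'M xM' xC.
by move: neq_CD; rewrite (Pmax_eq PC PD yC yD) eqxx.
Qed.

Lemma split_witnessE (P : {set V} -> {set V} -> {set V} -> Prop) M C D x y :
  splits M C D x y ->
  (exists M' C' D', [/\ min_strong col x y M', C' \in Pmax col M', D' \in Pmax col M',
                        [/\ x \in C', y \in D' & C' != D'] & P M' C' D'])
  <-> P M C D.
Proof.
move=> split_xy; have [_ PC PD [xC yD neq_CD]] := split_xy.
split => [[M' [C' [D' [min_M' PC' PD' [xC' yD' _] P_M'C'D']]]] | P_MCD].
  rewrite (min_strong_uniq min_M' (splits_min_strong split_xy)) in PC' PD' P_M'C'D'.
  by rewrite -(Pmax_eq PC' PC xC' xC) -(Pmax_eq PD' PD yD' yD).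
by exists M, C, D; split; first exact: splits_min_strong split_xy.
Qed.

Lemma splits_transfer_l M C D S x y z : splits M C D y z -> is_strong col S ->
  S \proper M -> x \in S -> y \in S -> splits M C D x z.
Proof.
case=> M_strong PC PD [yC zD neq_CD] S_strong ltSM xS yS; split => //; split => //.
exact: subsetP (strong_sub_Pmax PC S_strong ltSM yS yC) x xS.
Qed.

Lemma splits_transfer_r M C D S x y z : splits M C D x y -> is_strong col S ->
  S \proper M -> y \in S -> z \in S -> splits M C D x z.
Proof.
move=> /splits_sym split_yx S_strong ltSM yS zS.
exact/splits_sym/(splits_transfer_l split_yx S_strong ltSM).
Qed.

Section QuotientRelation.
Variables (l : {set V} -> {set V} -> nat) (i : nat).

Definition quot_sqsub (M A B : {set V}) : Prop :=
  (l M B < l M A /\ qcol col A B i) \/ (l M A < l M B /\ ~ qcol col B A i).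

Lemma quot_sqsub_irr M A : ~ quot_sqsub M A A.
Proof. by rewrite /quot_sqsub ltnn; case=> -[]. Qed.

Lemma sqsub_splitsE M C D x y : splits M C D x y ->
  sqsub col l i x y <-> quot_sqsub M C D.
Proof.
move=> split_xy; have split_yx := splits_sym split_xy.
have neq_xy := splits_neq split_xy.
have prec_xy := split_witnessE (fun M C D => l M C < l M D) split_xy.
have prec_yx := split_witnessE (fun M C D => l M C < l M D) split_yx.
have qcol_xy := split_witnessE (fun _ C D => qcol col C D i) split_xy.
have qcol_yx := split_witnessE (fun _ C D => qcol col C D i) split_yx.
rewrite /sqsub /prec /pair_qcol /quot_sqsub; tauto.
Qed.

Lemma sqsub_trans :
  (forall M A B C, is_strong col M -> A \in Pmax col M -> B \in Pmax col M ->
     C \in Pmax col M -> quot_sqsub M A B -> quot_sqsub M B C -> quot_sqsub M A C) ->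
  forall x y z, sqsub col l i x y -> sqsub col l i y z -> sqsub col l i x z.
Proof.
move=> quot_trans x y z xy yz.
have [M1 [C1 [D1 split1]]] := splits_exists xy.1.
have [M2 [C2 [D2 split2]]] := splits_exists yz.1.
have q1 := (sqsub_splitsE split1).1 xy; have q2 := (sqsub_splitsE split2).1 yz.
have [M1_strong PC1 PD1 [xC1 yD1 _]] := split1.
have [M2_strong PC2 PD2 [yC2 zD2 _]] := split2.
have yM1 := subsetP (Pmax_sub PD1) y yD1; have yM2 := subsetP (Pmax_sub PC2) y yC2.
case: (eqVneq M1 M2) => [eq_M | neq_M].
  rewrite -eq_M in PC2 PD2 q2; rewrite -(Pmax_eq PD1 PC2 yD1 yC2) in q2.
  have q3 := quot_trans _ _ _ _ M1_strong PC1 PD1 PD2 q1 q2.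
  have neq_CD : C1 != D2 by apply: contraPneq q3 => ->; apply: quot_sqsub_irr.
  by apply/(@sqsub_splitsE M1 C1 D2).
case: (strong_laminar M1_strong M2_strong yM1 yM2) => [sub12 | sub21].
  have lt12 : M1 \proper M2 by rewrite properEneq neq_M.
  have xM1 := subsetP (Pmax_sub PC1) x xC1.
  by apply/(sqsub_splitsE (splits_transfer_l split2 M1_strong lt12 xM1 yM1)).
have lt21 : M2 \proper M1 by rewrite properEneq eq_sym neq_M.
have zM2 := subsetP (Pmax_sub PD2) z zD2.
by apply/(sqsub_splitsE (splits_transfer_r split1 M2_strong lt21 yM2 zM2)).
Qed.

Variable k : nat.
Hypothesis quot_perm : forall M, is_strong col M -> quot_perm_graph col k M (l M).
Hypothesis i_color : 1 <= i <= k.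

Lemma quot_sqsub_perm_lt M : is_strong col M ->
  exists2 f, perm1 #|Pmax col M| f &
    forall A B, A \in Pmax col M -> B \in Pmax col M ->
      quot_sqsub M A B <-> perm_lt #|Pmax col M| f (l M A) (l M B).
Proof.
move=> M_strong; have [[l_inj l_rng] [pi pi_col]] := quot_perm M_strong.
have [pi_perm qcolE] := pi_col i i_color.
exists (pi i) => // A B PA PB; rewrite /quot_sqsub.
case: (ltngtP (l M A) (l M B)) => [ltAB | ltBA | eqAB].
- have qcolBA := qcolE B A PB PA ltAB.
  split=> [[[] // | [_ not_qcolBA]] | ltAB_pi].
    have neqAB : l M A != l M B by rewrite ltn_eqF.
    have [// | ltBA_pi] := perm_lt_total pi_perm (l_rng A PA) (l_rng B PB) neqAB.
    by case: not_qcolBA; apply/qcolBA.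
  by right; split=> // /qcolBA; apply: (perm_lt_asym pi_perm ltAB_pi).
- have qcolAB := qcolE A B PA PB ltBA.
  split=> [[[_ /qcolAB //] | []] // | /qcolAB qAB].
  by left.
- rewrite (l_inj A B) //.
  by split=> [[[] | []] // | /perm_lt_irr].
Qed.

Lemma quot_sqsub_trans M A B C : is_strong col M -> A \in Pmax col M ->
  B \in Pmax col M -> C \in Pmax col M ->
  quot_sqsub M A B -> quot_sqsub M B C -> quot_sqsub M A C.
Proof.
move=> /quot_sqsub_perm_lt[f f_perm ltE] PA PB PC.
rewrite !ltE //; exact: perm_lt_trans.
Qed.

Lemma quot_sqsub_total M A B : is_strong col M -> A \in Pmax col M ->
  B \in Pmax col M -> A != B -> quot_sqsub M A B \/ quot_sqsub M B A.
Proof.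
move=> M_strong PA PB neq_AB; have [[l_inj l_rng] _] := quot_perm M_strong.
have [f f_perm ltE] := quot_sqsub_perm_lt M_strong.
rewrite !ltE //; apply: perm_lt_total; rewrite ?l_rng //.
by apply: contra_neq neq_AB; apply: l_inj.
Qed.

End QuotientRelation.
End StrongModules.

Theorem lemma4p8 (V : finType) (k : nat) (col : V -> V -> nat)
  (l : {set V} -> {set V} -> nat) :
  complete_colored col k ->
  (forall M : {set V}, is_strong col M -> quot_perm_graph col k M (l M)) ->
  forall i, 1 <= i <= k -> strict_total_order (sqsub col l i).
Proof.
move=> _ quot_perm i i_color.
have trans := sqsub_trans (quot_sqsub_trans quot_perm i_color).
split; [|split; [|split]].
- move=> x y; case: (eqVneq x y) => [-> | neq_xy]; first by constructor 2.
  have [M [C [D split_xy]]] := splits_exists col neq_xy.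
  have [M_strong PC PD [_ _ neq_CD]] := split_xy.
  case: (quot_sqsub_total quot_perm i_color M_strong PC PD neq_CD) => [lt_CD | lt_DC].
    by constructor 1; apply/(sqsub_splitsE l i split_xy).
  by constructor 3; apply/(sqsub_splitsE l i (splits_sym split_xy)).
- by move=> x [/eqP].
- by move=> x y xy yx; case: (trans x y x xy yx) => /eqP.
- exact: trans.
Qed.
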